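(* For any solution $(w,F)\in X\times\mathbb R$ of the height equation, with $h=H+w$ and $\eta(q)=w(q,0)$, $$\int_{-M}^M\int_{-1}^0\frac{H_p^3w_q^2+(H_p+2h_p)w_p^2}{2h_p^2H_p^3}\,\Phi_p\Big(p;\frac1{F^2}\Big)\,dp\,dq+A\Big(\frac1{F^2}\Big)\int_{-M}^M\eta(q)\,dq\longrightarrow0\quad\text{as }M\to\infty.$$
   Context: Fix $\alpha\in(0,1)$, $\rho\in C^{2+\alpha}([-1,0])$ with $\rho>0$, $\rho_p\le0$, and $H\in C^{3+\alpha}([-1,0])$ with $H(-1)=0$, $H(0)=1$, $H_p>0$. Let $R=\mathbb R\times(-1,0)$ (coordinates $(q,p)$), $T=\mathbb R\times\{0\}$, $B=\mathbb R\times\{-1\}$. $(w,F)$ solves the height equation if $h=H+w$ satisfies $\big(-\frac{1+h_q^2}{2h_p^2}+\frac1{2H_p^2}\big)_p+\big(\frac{h_q}{h_p}\big)_q-\frac1{F^2}\rho_p(h-H)=0$ in $R$, $\frac{1+h_q^2}{2h_p^2}-\frac1{2H_p^2}+\frac1{F^2}\rho(h-1)=0$ on $T$, $h=0$ on $B$, and $0<\inf_R(H_p+w_p)<\infty$. $X$: $w\in C^{3+\alpha}(\overline R)$ of finite norm, even in $q$, with $w$ and derivatives of order $\le2$ tending to $0$ uniformly as $|q|\to\infty$, $w=0$ on $B$. For $\mu\ge0$, $\Phi(\cdot;\mu)$ solves $(\Phi_p/H_p^3)_p-\mu\rho_p\Phi=0$ on $(-1,0)$, $\Phi(-1)=0$,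 $\Phi_p(-1)=1$, and $A(\mu)=-\Phi_p(0;\mu)/H_p(0)^3+\mu\rho(0)\Phi(0;\mu)$. *)

From Stdlib Require Import Reals List.
From Coquelicot Require Import Coquelicot.
Open Scope R_scope.

(* ---------- one-dimensional Hölder spaces C^{k+alpha}([a,b]) ----------
   A function on [a,b] is represented by a function f : R -> R (an
   extension of it; only the values on [a,b] matter). *)
Definition hoelder1 (k : nat) (alpha : R) (f : R -> R) (a b : R) : Prop :=
  (forall n, (n < k)%nat -> forall x, ex_derive (Derive_n f n) x) /\
  exists C : R,
    (forall n, (n <= k)%nat -> forall x, a <= x <= b ->
        Rabs (Derive_n f n x) <= C) /\
    (forall x y, a <= x <= b -> a <= y <= b ->
        Rabs (Derive_n f k x - Derive_n f k y) <= C * Rpower (Rabs (x - y)) alpha).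

Definition d_q (f : R -> R -> R) : R -> R -> R :=
  fun q p => Derive (fun x => f x p) q.
Definition d_p (f : R -> R -> R) : R -> R -> R :=
  fun q p => Derive (fun y => f q y) p.

(* iterated partial derivative; [true] = d/dq, [false] = d/dp;
   the head of the list is applied last *)
Fixpoint pder (s : list bool) (f : R -> R -> R) : R -> R -> R :=
  match s with
  | nil => f
  | b :: s' => if b then d_q (pder s' f) else d_p (pder s' f)
  end.

(* closed strip  R-bar = R x [-1,0] *)
Definition in_strip (p : R) : Prop := -1 <= p <= 0.

Definition dist2 (q1 p1 q2 p2 : R) : R := sqrt ((q1 - q2)^2 + (p1 - p2)^2).

Definition hoelder_strip3 (alpha : R) (w : R -> R -> R) : Prop :=
  (forall s, (length s < 3)%nat -> forall q p,
      ex_derive (fun x => pder s w x p) q /\ ex_derive (fun y => pder s w q y) p) /\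
  exists C : R,
    (forall s, (length s <= 3)%nat -> forall q p, in_strip p ->
        Rabs (pder s w q p) <= C) /\
    (forall s, length s = 3%nat -> forall q1 p1 q2 p2, in_strip p1 -> in_strip p2 ->
        Rabs (pder s w q1 p1 - pder s w q2 p2) <= C * Rpower (dist2 q1 p1 q2 p2) alpha).

Definition in_X (alpha : R) (w : R -> R -> R) : Prop :=
  hoelder_strip3 alpha w /\
  (forall q p, in_strip p -> w (- q) p = w q p) /\
  (forall eps, 0 < eps -> exists K, forall s, (length s <= 2)%nat ->
      forall q p, K < Rabs q -> in_strip p -> Rabs (pder s w q p) < eps) /\
  (forall q, w q (-1) = 0).

Definition height_eq (rho H : R -> R) (w : R -> R -> R) (F : R) : Prop :=
  let h := fun q p => H p + w q p in
  let Hp := Derive H in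
  (forall q p, -1 < p < 0 ->
     Derive (fun y => - (1 + (d_q h q y)^2) / (2 * (d_p h q y)^2)
                      + 1 / (2 * (Hp y)^2)) p
     + Derive (fun x => d_q h x p / d_p h x p) q
     - / F^2 * Derive rho p * (h q p - H p) = 0) /\
  (forall q, (1 + (d_q h q 0)^2) / (2 * (d_p h q 0)^2) - 1 / (2 * (Hp 0)^2)
             + / F^2 * rho 0 * (h q 0 - 1) = 0) /\
  (forall q, h q (-1) = 0) /\
  (exists c, 0 < c /\ forall q p, -1 < p < 0 -> c <= Hp p + d_p w q p).

Definition is_Phi (rho H : R -> R) (mu : R) (Phi : R -> R) : Prop :=
  (forall x, ex_derive Phi x) /\
  (forall x, -1 < x < 0 ->
     ex_derive (fun y => Derive Phi y / (Derive H y)^3) x /\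
     Derive (fun y => Derive Phi y / (Derive H y)^3) x
       - mu * Derive rho x * Phi x = 0) /\
  Phi (-1) = 0 /\ Derive Phi (-1) = 1.

Definition A_coef (rho H : R -> R) (mu : R) (Phi : R -> R) : R :=
  - Derive Phi 0 / (Derive H 0)^3 + mu * rho 0 * Phi 0.

From Stdlib Require Import Reals List Lra Lia Classical FunctionalExtensionality.
From Coquelicot Require Import Coquelicot.
Open Scope R_scope.

(** The identity is the height equation multiplied by [Phi] and integrated by parts.
    Write [mu := 1/F^2], [a := -(1 + w_q^2)/(2 h_p^2) + 1/(2 H_p^2)] and [g := Phi_p / H_p^3].
    The height equation reads [a_p = -(w_q/h_p)_q + mu rho_p w] and the equation of [Phi] reads
    [g_p = mu rho_p Phi]; since [a - w_p / H_p^3] is minus the integrand [Q] of the statement,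
    [(a Phi - w g)_p = -(w_q/h_p)_q Phi - Q Phi_p]. Integrating in [p] over [[-1, 0]], the
    boundary conditions turn the left side into [A w(q,0)], so
    [int Q Phi_p dp = -A w(q,0) - B'(q)] with [B(q) := int (w_q/h_p) Phi dp]. Integrating in
    [q] over [[-M, M]] leaves [B(-M) - B(M)], which tends to [0] because [w_q] decays while
    [h_p] stays bounded below.

    The analytic care goes into the endpoints [p = -1] and [p = 0], where [Phi_p] is only
    controlled through the interior equation for [g], and into differentiating [B] under the
    integral, which works because the integrand is Lipschitz in [q] uniformly in [p]. *)

(** * Calculus on a compact interval *)

Lemma continuous_of_ex_derive (f : R -> R) x : ex_derive f x -> continuous f x.
Proof. exact (ex_derive_continuous (K := R_AbsRing) (V := R_NormedModule) f x). Qed.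

Lemma continuity_pt_of_ex_derive (f : R -> R) x : ex_derive f x -> continuity_pt f x.
Proof. intros Hf. apply continuity_pt_filterlim, continuous_of_ex_derive, Hf. Qed.

Lemma continuous_of_lipschitz (f : R -> R) x L :
  (forall y, Rabs (f y - f x) <= L * Rabs (y - x)) -> continuous f x.
Proof.
  intros Hf. apply continuity_pt_filterlim. intros e He.
  assert (HL : 0 < Rabs L + 1) by (pose proof (Rabs_pos L); lra).
  exists (e / (Rabs L + 1)). split; [apply Rdiv_lt_0_compat; lra|].
  intros y [_ Hy]. simpl in *. unfold R_dist in *.
  apply Rle_lt_trans with (Rabs L * Rabs (y - x)).
  - eapply Rle_trans; [apply Hf|]. apply Rmult_le_compat_r; [apply Rabs_pos|apply Rle_abs].
  - apply Rle_lt_trans with ((Rabs L + 1) * Rabs (y - x)); [pose proof (Rabs_pos (y - x)); nra|].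
    apply Rmult_lt_reg_r with (/ (Rabs L + 1)); [apply Rinv_0_lt_compat; lra|].
    rewrite Rmult_comm, <- Rmult_assoc, Rinv_l, Rmult_1_l by lra. exact Hy.
Qed.

Lemma lipschitz_constant_nonneg (f : R -> R) L x y : x <> y ->
  Rabs (f x - f y) <= L * Rabs (x - y) -> 0 <= L.
Proof.
  intros Hxy Hf. assert (0 < Rabs (x - y)) by (apply Rabs_pos_lt; lra).
  pose proof (Rabs_pos (f x - f y)). nra.
Qed.

Lemma exists_interior_near a b x d : a < b -> a <= x <= b -> 0 < d ->
  exists y, a < y < b /\ Rabs (y - x) < d.
Proof.
  intros Hab Hx Hd.
  set (t := Rmin 1 (d / (b - a)) / 2).
  assert (Ht : 0 < t <= 1 / 2 /\ t * (b - a) < d).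
  { assert (0 < d / (b - a)) by (apply Rdiv_lt_0_compat; lra).
    assert (H1 := Rmin_l 1 (d / (b - a))). assert (H2 := Rmin_r 1 (d / (b - a))).
    assert (0 < Rmin 1 (d / (b - a))) by (apply Rmin_glb_lt; lra).
    assert (d / (b - a) * (b - a) = d) by (field; lra).
    unfold t; split; [lra|nra]. }
  exists (x + t * ((a + b) / 2 - x)). split; [nra|].
  replace (x + t * ((a + b) / 2 - x) - x) with (t * ((a + b) / 2 - x)) by ring.
  rewrite Rabs_mult, Rabs_right by lra.
  apply Rle_lt_trans with (t * (b - a)); [|lra].
  apply Rmult_le_compat_l; [lra|]. apply Rabs_le; lra.
Qed.

Lemma le_of_le_on_interior (f : R -> R) a b c x : a < b -> a <= x <= b ->
  continuity_pt f x -> (forall y, a < y < b -> c <= f y) -> c <= f x.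
Proof.
  intros Hab Hx Hc Hge. apply Rnot_lt_le. intros Hlt.
  destruct (Hc (c - f x) ltac:(lra)) as [d [Hd Hnear]].
  destruct (exists_interior_near a b x d Hab Hx Hd) as [y [Hy Hyx]].
  destruct (Req_dec y x) as [->|Hne]; [specialize (Hge x Hy); lra|].
  assert (Hfy := Hnear y (conj (conj I (not_eq_sym Hne)) Hyx)). simpl in Hfy. unfold R_dist in Hfy.
  specialize (Hge y Hy). apply Rabs_def2 in Hfy. lra.
Qed.

Lemma ex_RInt_of_ex_derive (f : R -> R) a b : a <= b ->
  (forall p, a <= p <= b -> ex_derive f p) -> ex_RInt f a b.
Proof.
  intros Hab Hf. apply (ex_RInt_continuous (V := R_CompleteNormedModule)).
  rewrite Rmin_left, Rmax_right by exact Hab. intros p Hp. apply continuous_of_ex_derive, Hf, Hp.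
Qed.

Lemma Rabs_sub_le_of_derive_bound (f df : R -> R) K x y :
  (forall t, Rmin x y <= t <= Rmax x y -> is_derive f t (df t) /\ Rabs (df t) <= K) ->
  Rabs (f x - f y) <= K * Rabs (x - y).
Proof.
  intros Hd.
  destruct (MVT_gen f y x df) as [c [Hc Hfc]].
  - intros t Ht. apply Hd. rewrite Rmin_comm, Rmax_comm. lra.
  - intros t Ht. apply continuity_pt_of_ex_derive. eexists.
    apply Hd. rewrite Rmin_comm, Rmax_comm. exact Ht.
  - rewrite Hfc, Rabs_mult. apply Rmult_le_compat_r; [apply Rabs_pos|].
    apply Hd. rewrite Rmin_comm, Rmax_comm. exact Hc.
Qed.

Lemma MVT_strict (f : R -> R) x y : x <> y -> (forall t, ex_derive f t) ->
  exists c, Rmin x y < c < Rmax x y /\ f y - f x = Derive f c * (y - x).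
Proof.
  intros Hxy Hf.
  assert (Hd : forall t, derivable_pt_lim f t (Derive f t))
    by (intro t; apply is_derive_Reals, Derive_correct, Hf).
  destruct (Rlt_or_le x y) as [Hlt|Hle].
  - destruct (MVT_cor2 f (Derive f) x y Hlt (fun t _ => Hd t)) as [c [Hc Hin]].
    exists c. rewrite Rmin_left, Rmax_right by lra. auto.
  - destruct (MVT_cor2 f (Derive f) y x ltac:(lra) (fun t _ => Hd t)) as [c [Hc Hin]].
    exists c. rewrite Rmin_right, Rmax_left by lra. split; [auto|lra].
Qed.

(* At an endpoint, a difference quotient towards the interior is, by the mean value theorem,
   a value of [Derive f] at an interior point. *)
Lemma Derive_near_interior (f : R -> R) a b x e : a < b -> (forall t, ex_derive f t) ->
  a <= x <= b -> 0 < e ->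
  exists z, a < z < b /\ Rabs (z - x) < e /\ Rabs (Derive f z - Derive f x) < e.
Proof.
  intros Hab Hf Hx He.
  destruct (classic (a < x < b)) as [Hin|Hout].
  { exists x. rewrite !Rminus_diag, Rabs_R0. auto. }
  destruct (proj1 (is_derive_Reals _ _ _) (Derive_correct _ _ (Hf x)) e He) as [d Hd].
  assert (Hde : 0 < Rmin d e) by (apply Rmin_glb_lt; [apply cond_pos|lra]).
  destruct (exists_interior_near a b x _ Hab Hx Hde) as [y [Hy Hyx]].
  assert (Hne : y - x <> 0) by (intros E; apply Hout; replace x with y by lra; exact Hy).
  destruct (MVT_strict f x y ltac:(lra) Hf) as [z [Hz Hfz]].
  assert (Hzx : Rabs (z - x) < Rabs (y - x))
    by (unfold Rmin, Rmax in Hz; destruct Rle_dec; split_Rabs; lra).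
  assert (H1 := Rmin_l d e). assert (H2 := Rmin_r d e).
  exists z. split; [unfold Rmin, Rmax in Hz; destruct Rle_dec; lra|]. split; [lra|].
  specialize (Hd (y - x) Hne ltac:(lra)).
  replace (x + (y - x)) with y in Hd by ring.
  replace ((f y - f x) / (y - x)) with (Derive f z) in Hd by (rewrite Hfz; field; exact Hne).
  exact Hd.
Qed.

Lemma Derive_lipschitz_closure (f : R -> R) a b L : a < b -> (forall x, ex_derive f x) ->
  (forall x y, a < x < b -> a < y < b -> Rabs (Derive f x - Derive f y) <= L * Rabs (x - y)) ->
  forall x y, a <= x <= b -> a <= y <= b ->
  Rabs (Derive f x - Derive f y) <= L * Rabs (x - y).
Proof.
  intros Hab Hf Hl x y Hx Hy. apply le_epsilon. intros eps Heps.
  assert (HL : 0 <= L)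
    by (apply (lipschitz_constant_nonneg (Derive f) L ((2 * a + b) / 3) ((a + 2 * b) / 3));
        [|apply Hl]; lra).
  set (e := eps / (2 + 2 * L)).
  assert (He : 0 < e) by (apply Rdiv_lt_0_compat; lra).
  destruct (Derive_near_interior f a b x e Hab Hf Hx He) as [zx [Hzx [Hzx1 Hzx2]]].
  destruct (Derive_near_interior f a b y e Hab Hf Hy He) as [zy [Hzy [Hzy1 Hzy2]]].
  assert (Hz := Hl zx zy Hzx Hzy).
  assert (Rabs (zx - zy) <= Rabs (x - y) + 2 * e)
    by (revert Hzx1 Hzy1; split_Rabs; lra).
  assert (Rabs (Derive f x - Derive f y) <= L * Rabs (zx - zy) + 2 * e)
    by (revert Hz Hzx2 Hzy2; split_Rabs; lra).
  assert (L * Rabs (zx - zy) <= L * (Rabs (x - y) + 2 * e)) by (apply Rmult_le_compat_l; lra).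
  assert (e * (2 + 2 * L) = eps) by (unfold e; field; lra).
  nra.
Qed.

Lemma RInt_derive_interior (f df : R -> R) a b : a <= b ->
  (forall x, a < x < b -> is_derive f x (df x)) ->
  (forall x, a <= x <= b -> continuity_pt f x) ->
  (forall x, continuous df x) ->
  RInt df a b = f b - f a.
Proof.
  intros Hab Hf Hfc Hdf.
  set (G := fun x => RInt df a x).
  assert (HG : forall x, is_derive G x (df x)).
  { intro x. apply (is_derive_RInt df G a x); [|apply Hdf].
    apply filter_forall. intro y. apply (RInt_correct (V := R_CompleteNormedModule)).
    apply (ex_RInt_continuous (V := R_CompleteNormedModule)). intros; apply Hdf. }
  destruct (MVT_gen (fun x => f x - G x) a b (fun _ => 0)) as [c [_ Hc]].
  - rewrite Rmin_left, Rmax_right by exact Hab. intros x Hx.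
    replace 0 with (df x - df x) by ring. apply (is_derive_minus f G); auto.
  - rewrite Rmin_left, Rmax_right by exact Hab. intros x Hx.
    apply continuity_pt_minus; [auto|]. apply continuity_pt_of_ex_derive. eexists; apply HG.
  - assert (G a = 0) by exact (RInt_point a df). unfold G in *. lra.
Qed.

Lemma Rabs_increment_sub_derive_le (f df : R -> R) L x y :
  (forall u, is_derive f u (df u)) ->
  (forall u v, Rabs (df u - df v) <= L * Rabs (u - v)) ->
  Rabs (f y - f x - (y - x) * df x) <= L * (y - x) ^ 2.
Proof.
  intros Hf Hl.
  assert (HL : 0 <= L) by (apply (lipschitz_constant_nonneg df L 1 0); [lra|apply Hl]).
  replace (f y - f x - (y - x) * df x) with ((f y - df x * y) - (f x - df x * x)) by ring.
  replace (L * (y - x) ^ 2) with ((L * Rabs (y - x)) * Rabs (y - x))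
    by (rewrite Rmult_assoc, <- Rabs_mult, <- Rsqr_pow2, Rabs_right;
        [unfold Rsqr; ring|apply Rle_ge, Rle_0_sqr]).
  apply (Rabs_sub_le_of_derive_bound (fun u => f u - df x * u) (fun u => df u - df x) _ y x).
  intros t Ht. split.
  - apply (is_derive_minus f (fun u => df x * u)); [apply Hf|].
    auto_derive; [exact I|ring].
  - eapply Rle_trans; [apply Hl|]. apply Rmult_le_compat_l; [exact HL|].
    unfold Rmin, Rmax in Ht; destruct Rle_dec; split_Rabs; lra.
Qed.

Section Clamp.

Variables a b : R.

Definition clamp (p : R) : R := Rmax a (Rmin p b).

Lemma clamp_in p : a <= b -> a <= clamp p <= b.
Proof. intros. unfold clamp, Rmax, Rmin. repeat destruct Rle_dec; lra. Qed.

Lemma clamp_id p : a <= p <= b -> clamp p = p.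
Proof. intros. unfold clamp, Rmax, Rmin. repeat destruct Rle_dec; lra. Qed.

Lemma Rabs_clamp_sub x y : Rabs (clamp x - clamp y) <= Rabs (x - y).
Proof. unfold clamp, Rmax, Rmin. repeat destruct Rle_dec; split_Rabs; lra. Qed.

Lemma continuous_clamp_comp (f : R -> R) : a <= b ->
  (forall p, a <= p <= b -> continuity_pt f p) ->
  forall x, continuous (fun p => f (clamp p)) x.
Proof.
  intros Hab Hf x. apply continuity_pt_filterlim, (continuity_pt_comp clamp f x).
  - apply continuity_pt_filterlim, (continuous_of_lipschitz _ _ 1). intro y.
    rewrite Rmult_1_l. apply Rabs_clamp_sub.
  - apply Hf, clamp_in, Hab.
Qed.

Lemma continuous_clamp_comp_lipschitz (f : R -> R) L : a < b ->
  (forall x y, a <= x <= b -> a <= y <= b -> Rabs (f x - f y) <= L * Rabs (x - y)) ->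
  forall x, continuous (fun p => f (clamp p)) x.
Proof.
  intros Hab Hf x.
  assert (HL : 0 <= L) by (apply (lipschitz_constant_nonneg f L a b); [|apply Hf]; lra).
  apply (continuous_of_lipschitz _ _ L). intro y.
  eapply Rle_trans; [apply Hf; apply clamp_in; lra|].
  apply Rmult_le_compat_l; [exact HL|apply Rabs_clamp_sub].
Qed.

Lemma RInt_clamp (f : R -> R) : a <= b -> RInt (fun p => f (clamp p)) a b = RInt f a b.
Proof.
  intros Hab. apply RInt_ext. rewrite Rmin_left, Rmax_right by exact Hab.
  intros x Hx. rewrite clamp_id by lra. reflexivity.
Qed.

Lemma is_RInt_clamp (f : R -> R) : a <= b ->
  (forall x, continuous (fun p => f (clamp p)) x) ->
  is_RInt (fun p => f (clamp p)) a b (RInt f a b).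
Proof.
  intros Hab Hf. rewrite <- RInt_clamp by exact Hab.
  apply (RInt_correct (V := R_CompleteNormedModule)).
  apply (ex_RInt_continuous (V := R_CompleteNormedModule)). intros; apply Hf.
Qed.

End Clamp.

(** * Integrals depending on a parameter *)

Section ParametricIntegral.

Variables (k kd : R -> R -> R) (a b L : R).
Hypothesis Hab : a <= b.
Hypothesis k_derive : forall u t, a <= t <= b -> is_derive (fun u => k u t) u (kd u t).
Hypothesis kd_lipschitz : forall u v t, a <= t <= b -> Rabs (kd u t - kd v t) <= L * Rabs (u - v).
Hypothesis k_integrable : forall u, ex_RInt (k u) a b.
Hypothesis kd_integrable : forall u, ex_RInt (kd u) a b.

Lemma RInt_param_lipschitz u v :
  Rabs (RInt (kd u) a b - RInt (kd v) a b) <= (b - a) * L * Rabs (u - v).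
Proof.
  rewrite <- (RInt_minus (kd u) (kd v)) by auto.
  rewrite Rmult_assoc. apply abs_RInt_le_const; auto.
  apply (ex_RInt_minus (kd u) (kd v)); auto.
Qed.

Lemma RInt_param_increment_le x y :
  Rabs (RInt (k y) a b - RInt (k x) a b - (y - x) * RInt (kd x) a b)
    <= (b - a) * (L * (y - x) ^ 2).
Proof.
  assert (Hinc : is_RInt (fun t => k y t - k x t - (y - x) * kd x t) a b
                   (RInt (k y) a b - RInt (k x) a b - (y - x) * RInt (kd x) a b)).
  { apply (is_RInt_minus (V := R_NormedModule)); [apply (is_RInt_minus (V := R_NormedModule))|];
      [| |apply (is_RInt_scal (V := R_NormedModule))];
      apply (RInt_correct (V := R_CompleteNormedModule)); auto. }
  rewrite <- (is_RInt_unique _ _ _ _ Hinc).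
  apply abs_RInt_le_const; [exact Hab|eexists; exact Hinc|].
  intros t Ht. apply (Rabs_increment_sub_derive_le (fun u => k u t) (fun u => kd u t)).
  - intro u. apply k_derive, Ht.
  - intros u v. apply kd_lipschitz, Ht.
Qed.

Lemma is_derive_RInt_param_lipschitz x :
  is_derive (fun u => RInt (k u) a b) x (RInt (kd x) a b).
Proof.
  assert (HL : 0 <= L)
    by (apply (lipschitz_constant_nonneg (fun u => kd u a) L 1 0); [|apply kd_lipschitz]; lra).
  assert (HbaL : 0 <= (b - a) * L) by (apply Rmult_le_pos; lra).
  assert (HK : 0 < (b - a) * L + 1) by lra.
  apply is_derive_Reals. intros e He.
  exists (mkposreal _ (Rdiv_lt_0_compat _ _ He HK)). intros h Hh0 Hh. simpl in Hh.
  assert (Hinc := RInt_param_increment_le x (x + h)).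
  replace (x + h - x) with h in Hinc by ring.
  replace ((RInt (k (x + h)) a b - RInt (k x) a b) / h - RInt (kd x) a b)
    with ((RInt (k (x + h)) a b - RInt (k x) a b - h * RInt (kd x) a b) / h) by (field; exact Hh0).
  assert (Habs : 0 < Rabs h) by (apply Rabs_pos_lt, Hh0).
  unfold Rdiv. rewrite Rabs_mult, Rabs_inv.
  apply Rmult_lt_reg_r with (Rabs h); [exact Habs|].
  rewrite Rmult_assoc, Rinv_l, Rmult_1_r by lra.
  apply Rle_lt_trans with ((b - a) * (L * h ^ 2)); [exact Hinc|].
  rewrite <- Rsqr_pow2, Rsqr_abs. unfold Rsqr.
  assert (Rabs h * ((b - a) * L + 1) < e)
    by (apply Rmult_lt_reg_r with (/ ((b - a) * L + 1)); [apply Rinv_0_lt_compat; lra|];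
        rewrite Rmult_assoc, Rinv_r by lra; lra).
  nra.
Qed.

End ParametricIntegral.

Definition lipschitz_bounded (D : R -> Prop) (f : R -> R) (L B : R) : Prop :=
  forall x y, D x -> D y -> Rabs (f x - f y) <= L * Rabs (x - y) /\ Rabs (f x) <= B.

Section LipschitzBounded.

Variable D : R -> Prop.

Lemma lipschitz_bounded_ext (f g : R -> R) L B : (forall x, D x -> f x = g x) ->
  lipschitz_bounded D f L B -> lipschitz_bounded D g L B.
Proof. intros Hfg Hf x y Hx Hy. rewrite <- !Hfg by auto. auto. Qed.

Lemma lipschitz_bounded_const (k B : R) : Rabs k <= B ->
  lipschitz_bounded D (fun _ => k) 0 B.
Proof. intros Hk x y _ _. rewrite Rminus_diag, Rabs_R0, Rmult_0_l. split; lra. Qed.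

Lemma lipschitz_bounded_opp (f : R -> R) L B : lipschitz_bounded D f L B ->
  lipschitz_bounded D (fun x => - f x) L B.
Proof.
  intros Hf x y Hx Hy. rewrite Rabs_Ropp.
  replace (- f x - - f y) with (- (f x - f y)) by ring. rewrite Rabs_Ropp. auto.
Qed.

Lemma lipschitz_bounded_plus (f g : R -> R) Lf Bf Lg Bg :
  lipschitz_bounded D f Lf Bf -> lipschitz_bounded D g Lg Bg ->
  lipschitz_bounded D (fun x => f x + g x) (Lf + Lg) (Bf + Bg).
Proof.
  intros Hf Hg x y Hx Hy.
  destruct (Hf x y Hx Hy) as [Hf1 Hf2]. destruct (Hg x y Hx Hy) as [Hg1 Hg2].
  split; [|eapply Rle_trans; [apply Rabs_triang|lra]].
  replace (f x + g x - (f y + g y)) with ((f x - f y) + (g x - g y)) by ring.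
  eapply Rle_trans; [apply Rabs_triang|lra].
Qed.

Lemma lipschitz_bounded_mult (f g : R -> R) Lf Bf Lg Bg :
  lipschitz_bounded D f Lf Bf -> lipschitz_bounded D g Lg Bg ->
  lipschitz_bounded D (fun x => f x * g x) (Bf * Lg + Lf * Bg) (Bf * Bg).
Proof.
  intros Hf Hg x y Hx Hy.
  destruct (Hf x y Hx Hy) as [Hf1 Hf2]. destruct (Hg x y Hx Hy) as [Hg1 Hg2].
  destruct (Hg y x Hy Hx) as [_ Hg3].
  pose proof (Rabs_pos (f x)). pose proof (Rabs_pos (g y)).
  pose proof (Rabs_pos (f x - f y)). pose proof (Rabs_pos (g x - g y)).
  split; [|rewrite Rabs_mult; apply Rmult_le_compat; auto; apply Rabs_pos].
  replace (f x * g x - f y * g y) with (f x * (g x - g y) + (f x - f y) * g y) by ring.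
  eapply Rle_trans; [apply Rabs_triang|]. rewrite !Rabs_mult.
  assert (Rabs (f x) * Rabs (g x - g y) <= Bf * (Lg * Rabs (x - y)))
    by (apply Rmult_le_compat; auto).
  assert (Rabs (f x - f y) * Rabs (g y) <= Lf * Rabs (x - y) * Bg)
    by (apply Rmult_le_compat; auto).
  lra.
Qed.

Lemma lipschitz_bounded_inv (f : R -> R) L B c : 0 < c -> (forall x, D x -> c <= f x) ->
  lipschitz_bounded D f L B -> lipschitz_bounded D (fun x => / f x) (L / (c * c)) (/ c).
Proof.
  intros Hc Hge Hf x y Hx Hy.
  destruct (Hf x y Hx Hy) as [Hf1 _]. assert (Hfx := Hge x Hx). assert (Hfy := Hge y Hy).
  split; [|rewrite Rabs_right by (apply Rle_ge, Rlt_le, Rinv_0_lt_compat; lra);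
            apply Rinv_le_contravar; lra].
  replace (/ f x - / f y) with ((f y - f x) / (f x * f y)) by (field; lra).
  unfold Rdiv. rewrite Rabs_mult, Rabs_minus_sym, Rabs_inv, (Rabs_right (f x * f y)) by nra.
  assert (/ (f x * f y) <= / (c * c)) by (apply Rinv_le_contravar; nra).
  assert (0 < / (f x * f y)) by (apply Rinv_0_lt_compat; nra).
  pose proof (Rabs_pos (f x - f y)).
  apply Rle_trans with (L * Rabs (x - y) * / (c * c)); [apply Rmult_le_compat; lra|].
  lra.
Qed.

End LipschitzBounded.

Lemma lipschitz_bounded_of_derive (f df : R -> R) a b x0 K : a < x0 < b ->
  (forall t, a < t < b -> is_derive f t (df t) /\ Rabs (df t) <= K) ->
  lipschitz_bounded (fun t => a < t < b) f K (Rabs (f x0) + K * (b - a)).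
Proof.
  intros Hx0 Hd.
  assert (Hlip : forall x y, a < x < b -> a < y < b -> Rabs (f x - f y) <= K * Rabs (x - y)).
  { intros x y Hx Hy. apply (Rabs_sub_le_of_derive_bound f df). intros t Ht. apply Hd.
    unfold Rmin, Rmax in Ht; destruct Rle_dec; lra. }
  assert (HK : 0 <= K) by (eapply Rle_trans; [apply Rabs_pos|apply (Hd x0 Hx0)]).
  intros x y Hx Hy. split; [auto|].
  replace (f x) with ((f x - f x0) + f x0) by ring.
  eapply Rle_trans; [apply Rabs_triang|].
  assert (K * Rabs (x - x0) <= K * (b - a)) by (apply Rmult_le_compat_l; [lra|split_Rabs; lra]).
  assert (Hl := Hlip x x0 Hx Hx0). lra.
Qed.

Lemma d_q_profile_plus (H : R -> R) (w : R -> R -> R) q p : ex_derive (fun x => w x p) q ->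
  d_q (fun x y => H y + w x y) q p = d_q w q p.
Proof.
  intros Hw. unfold d_q. apply is_derive_unique. auto_derive; [exact Hw|ring].
Qed.

Lemma d_p_profile_plus (H : R -> R) (w : R -> R -> R) q p : ex_derive H p ->
  ex_derive (fun y => w q y) p ->
  d_p (fun x y => H y + w x y) q p = Derive H p + d_p w q p.
Proof.
  intros HH Hw. unfold d_p. apply is_derive_unique.
  auto_derive; [tauto|]. rewrite !Rmult_1_l. reflexivity.
Qed.

(** * The energy identity *)

Section EnergyFlux.

Variables (rho H Phi : R -> R) (w : R -> R -> R) (mu c CH Cr Cw : R).

Definition height (q p : R) : R := H p + w q p.

Hypothesis H_ex_derive : forall x, ex_derive H x.
Hypothesis DH_ex_derive : forall x, ex_derive (Derive H) x.
Hypothesis DH_pos : forall p, -1 <= p <= 0 -> 0 < Derive H p.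
Hypothesis D2H_bound : forall p, -1 <= p <= 0 -> Rabs (Derive (Derive H) p) <= CH.
Hypothesis DH_bound : forall p, -1 <= p <= 0 -> Rabs (Derive H p) <= CH.
Hypothesis H_top : H 0 = 1.
Hypothesis Drho_bound : forall p, -1 <= p <= 0 -> Rabs (Derive rho p) <= Cr.
Hypothesis Phi_ex_derive : forall x, ex_derive Phi x.
Hypothesis Phi_ode : forall x, -1 < x < 0 ->
  ex_derive (fun y => Derive Phi y / (Derive H y)^3) x /\
  Derive (fun y => Derive Phi y / (Derive H y)^3) x - mu * Derive rho x * Phi x = 0.
Hypothesis Phi_bottom : Phi (-1) = 0.
Hypothesis w_ex_derive : forall s, (length s < 3)%nat -> forall q p,
  ex_derive (fun x => pder s w x p) q /\ ex_derive (fun y => pder s w q y) p.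
Hypothesis w_bound : forall s, (length s <= 3)%nat -> forall q p, in_strip p ->
  Rabs (pder s w q p) <= Cw.
Hypothesis w_q_decay : forall eps, 0 < eps -> exists K, forall q p, K < Rabs q -> in_strip p ->
  Rabs (d_q w q p) < eps.
Hypothesis w_bottom : forall q, w q (-1) = 0.
Hypothesis height_eq_interior : forall q p, -1 < p < 0 ->
  Derive (fun y => - (1 + (d_q height q y)^2) / (2 * (d_p height q y)^2)
                   + 1 / (2 * (Derive H y)^2)) p
  + Derive (fun x => d_q height x p / d_p height x p) q
  - mu * Derive rho p * (height q p - H p) = 0.
Hypothesis height_eq_top : forall q,
  (1 + (d_q height q 0)^2) / (2 * (d_p height q 0)^2) - 1 / (2 * (Derive H 0)^2)
  + mu * rho 0 * (height q 0 - 1) = 0.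
Hypothesis c_pos : 0 < c.
Hypothesis height_p_lower : forall q p, -1 < p < 0 -> c <= Derive H p + d_p w q p.

Lemma w_derive_q s : (length s < 3)%nat -> forall q p,
  is_derive (fun x => pder s w x p) q (pder (true :: s) w q p).
Proof. intros Hs q p. apply Derive_correct, (w_ex_derive s Hs q p). Qed.

Lemma w_derive_p s : (length s < 3)%nat -> forall q p,
  is_derive (fun y => pder s w q y) p (pder (false :: s) w q p).
Proof. intros Hs q p. apply Derive_correct, (w_ex_derive s Hs q p). Qed.

Lemma w_ex_derive_p s : (length s < 3)%nat -> forall q p, ex_derive (fun y => pder s w q y) p.
Proof. intros Hs q p. apply (w_ex_derive s Hs q p). Qed.

Definition height_p (q p : R) : R := Derive H p + d_p w q p.

Lemma d_q_height : d_q height = d_q w.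
Proof.
  do 2 (apply functional_extensionality; intro).
  exact (d_q_profile_plus H w _ _ (proj1 (w_ex_derive nil ltac:(simpl; lia) _ _))).
Qed.

Lemma d_p_height : d_p height = height_p.
Proof.
  do 2 (apply functional_extensionality; intro).
  exact (d_p_profile_plus H w _ _ (H_ex_derive _) (w_ex_derive_p nil ltac:(simpl; lia) _ _)).
Qed.

Lemma height_p_ex_derive q p : ex_derive (height_p q) p.
Proof.
  apply (ex_derive_plus (Derive H) (d_p w q)); [apply DH_ex_derive|].
  apply (w_ex_derive_p (false :: nil)); simpl; lia.
Qed.

Lemma height_p_ge q p : -1 <= p <= 0 -> c <= height_p q p.
Proof.
  intros Hp. apply (le_of_le_on_interior _ (-1) 0); [lra|exact Hp| |apply height_p_lower].
  apply continuity_pt_of_ex_derive, height_p_ex_derive.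
Qed.

Lemma Phi_bounded : exists KP, forall p, -1 <= p <= 0 -> Rabs (Phi p) <= KP.
Proof.
  destruct (continuity_ab_maj (fun p => Rabs (Phi p)) (-1) 0) as [m [Hm _]]; [lra| |].
  - intros p _. apply (continuity_pt_comp Phi Rabs); [|apply Rcontinuity_abs].
    apply continuity_pt_of_ex_derive, Phi_ex_derive.
  - exists (Rabs (Phi m)). exact Hm.
Qed.

Definition Phi_ratio (p : R) : R := Derive Phi p / Derive H p ^ 3.

Lemma Phi_ratio_derive x : -1 < x < 0 -> is_derive Phi_ratio x (mu * Derive rho x * Phi x).
Proof.
  intros Hx. destruct (Phi_ode x Hx) as [Hex Hode].
  replace (mu * Derive rho x * Phi x) with (Derive Phi_ratio x) by (unfold Phi_ratio; lra).
  apply Derive_correct, Hex.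
Qed.

Lemma Derive_Phi_lipschitz : exists L, forall x y, -1 <= x <= 0 -> -1 <= y <= 0 ->
  Rabs (Derive Phi x - Derive Phi y) <= L * Rabs (x - y).
Proof.
  destruct Phi_bounded as [KP HKP].
  assert (Hratio : lipschitz_bounded (fun t => -1 < t < 0) Phi_ratio (Rabs mu * Cr * KP)
                     (Rabs (Phi_ratio (-1/2)) + Rabs mu * Cr * KP * (0 - -1))).
  { apply (lipschitz_bounded_of_derive _ (fun t => mu * Derive rho t * Phi t)); [lra|].
    intros t Ht. split; [apply Phi_ratio_derive, Ht|].
    rewrite !Rabs_mult. pose proof (Rabs_pos mu). pose proof (Rabs_pos (Phi t)).
    apply Rmult_le_compat; [apply Rmult_le_pos; auto; apply Rabs_pos|auto| |apply HKP; lra].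
    apply Rmult_le_compat_l; [auto|apply Drho_bound; lra]. }
  assert (HDH : lipschitz_bounded (fun t => -1 < t < 0) (Derive H) CH
                  (Rabs (Derive H (-1/2)) + CH * (0 - -1))).
  { apply (lipschitz_bounded_of_derive _ (Derive (Derive H))); [lra|].
    intros t Ht. split; [apply Derive_correct, DH_ex_derive|apply D2H_bound; lra]. }
  assert (Hprod := lipschitz_bounded_mult _ _ _ _ _ _ _ Hratio
                     (lipschitz_bounded_mult _ _ _ _ _ _ _ HDH
                        (lipschitz_bounded_mult _ _ _ _ _ _ _ HDH HDH))).
  eexists. apply (Derive_lipschitz_closure Phi (-1) 0); [lra|exact Phi_ex_derive|].
  intros x y Hx Hy.
  assert (Hsplit : forall t, -1 < t < 0 ->
            Derive Phi t = Phi_ratio t * (Derive H t * (Derive H t * Derive H t))).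
  { intros t Ht. assert (0 < Derive H t) by (apply DH_pos; lra).
    unfold Phi_ratio. field. lra. }
  rewrite (Hsplit x Hx), (Hsplit y Hy). apply (Hprod x y Hx Hy).
Qed.

Definition flux_q (q p : R) : R := d_q w q p / height_p q p.

Definition d_q_flux_q (q p : R) : R :=
  (d_q (d_q w) q p * height_p q p - d_q w q p * d_q (d_p w) q p) / height_p q p ^ 2.

Definition flux_p (q p : R) : R :=
  - (1 + (d_q w q p)^2) / (2 * (height_p q p)^2) + 1 / (2 * (Derive H p)^2).

Definition energy (q p : R) : R :=
  (Derive H p ^ 3 * (d_q w q p)^2 + (Derive H p + 2 * height_p q p) * (d_p w q p)^2)
    / (2 * (height_p q p)^2 * Derive H p ^ 3).

Ltac solve_side_conditions :=
  repeat match goal with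
  | |- _ /\ _ => split
  | |- True => exact I
  | |- ex_derive (fun x => height_p _ x) _ => apply height_p_ex_derive
  | |- ex_derive (fun x => Derive H x) _ => apply DH_ex_derive
  | |- ex_derive (fun x => Phi x) _ => apply Phi_ex_derive
  | |- ex_derive (fun x => w _ x) _ => apply (w_ex_derive_p nil); simpl; lia
  | |- ex_derive (fun x => d_q w _ x) _ => apply (w_ex_derive_p (true :: nil)); simpl; lia
  | |- ex_derive (fun x => d_p w _ x) _ => apply (w_ex_derive_p (false :: nil)); simpl; lia
  | |- ex_derive (fun x => d_q (d_q w) _ x) _ =>
      apply (w_ex_derive_p (true :: true :: nil)); simpl; lia
  | |- ex_derive (fun x => d_q (d_p w) _ x) _ =>
      apply (w_ex_derive_p (true :: false :: nil)); simpl; lia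
  end.

Lemma flux_q_derive_q q p : -1 <= p <= 0 -> is_derive (fun x => flux_q x p) q (d_q_flux_q q p).
Proof.
  intros Hp. assert (Hc := height_p_ge q p Hp). unfold flux_q, d_q_flux_q, height_p in *.
  auto_derive.
  - split; [eexists; apply (w_derive_q (true :: nil)); simpl; lia|].
    split; [eexists; apply (w_derive_q (false :: nil)); simpl; lia|].
    split; [lra|exact I].
  - change (Derive (fun x => d_q w x p) q) with (d_q (d_q w) q p).
    change (Derive (fun x => d_p w x p) q) with (d_q (d_p w) q p).
    field. lra.
Qed.

Lemma flux_p_ex_derive q p : -1 <= p <= 0 -> ex_derive (flux_p q) p.
Proof.
  intros Hp. assert (Hc := height_p_ge q p Hp). assert (HH := DH_pos p Hp).
  unfold flux_p. auto_derive. solve_side_conditions; apply Rgt_not_eq; nra.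
Qed.

Lemma flux_p_derive q p : -1 < p < 0 ->
  is_derive (flux_p q) p (- d_q_flux_q q p + mu * Derive rho p * w q p).
Proof.
  intros Hp. assert (E := height_eq_interior q p Hp).
  rewrite d_q_height, d_p_height in E.
  replace (Derive (fun x => d_q w x p / height_p x p) q) with (d_q_flux_q q p) in E
    by (symmetry; apply is_derive_unique, flux_q_derive_q; lra).
  replace (- d_q_flux_q q p + mu * Derive rho p * w q p) with (Derive (flux_p q) p)
    by (unfold height in E; fold (flux_p q) in E; lra).
  apply Derive_correct, flux_p_ex_derive. lra.
Qed.

Lemma flux_p_top q : flux_p q 0 = mu * rho 0 * w q 0.
Proof.
  assert (E := height_eq_top q). rewrite d_q_height, d_p_height in E.
  unfold height in E. rewrite H_top in E. unfold flux_p. lra.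
Qed.

Lemma flux_p_sub_energy q p : -1 <= p <= 0 ->
  flux_p q p - d_p w q p / Derive H p ^ 3 = - energy q p.
Proof.
  intros Hp. assert (Hc := height_p_ge q p Hp). assert (HH := DH_pos p Hp).
  unfold flux_p, energy, height_p in *. field. lra.
Qed.

Lemma d_q_flux_q_ex_derive q p : -1 <= p <= 0 -> ex_derive (d_q_flux_q q) p.
Proof.
  intros Hp. assert (Hc := height_p_ge q p Hp).
  unfold d_q_flux_q. auto_derive. solve_side_conditions; apply Rgt_not_eq; nra.
Qed.

Lemma energy_ex_derive q p : -1 <= p <= 0 -> ex_derive (energy q) p.
Proof.
  intros Hp. assert (Hc := height_p_ge q p Hp). assert (HH := DH_pos p Hp).
  unfold energy. auto_derive. solve_side_conditions; apply Rgt_not_eq.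
  repeat apply Rmult_lt_0_compat; nra.
Qed.

Lemma continuous_Derive_Phi_clamp x : continuous (fun p => Derive Phi (clamp (-1) 0 p)) x.
Proof.
  destruct Derive_Phi_lipschitz as [L HL].
  apply (continuous_clamp_comp_lipschitz _ _ _ L); [lra|exact HL].
Qed.

(* [Derive Phi] is read through [clamp] because it is continuous on [-1, 0] only as a
   restriction: nothing is known about [Phi] outside the interval. *)
Definition potential (q p : R) : R :=
  flux_p q p * Phi p - w q p * (Derive Phi (clamp (-1) 0 p) / Derive H p ^ 3).

Lemma Phi_ratio_clamp_derive x : -1 < x < 0 ->
  is_derive (fun p => Derive Phi (clamp (-1) 0 p) / Derive H p ^ 3) x (mu * Derive rho x * Phi x).
Proof.
  intros Hx.
  apply (is_derive_ext_loc Phi_ratio (fun p => Derive Phi (clamp (-1) 0 p) / Derive H p ^ 3));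
    [|apply Phi_ratio_derive, Hx].
  apply (locally_interval _ x (-1) 0); simpl; try lra.
  intros y Hy1 Hy2. unfold Phi_ratio. rewrite clamp_id by lra. reflexivity.
Qed.

Lemma potential_derive q x : -1 < x < 0 ->
  is_derive (potential q) x (- (d_q_flux_q q x * Phi x + energy q x * Derive Phi x)).
Proof.
  intros Hx.
  replace (- (d_q_flux_q q x * Phi x + energy q x * Derive Phi x))
    with ((- d_q_flux_q q x + mu * Derive rho x * w q x) * Phi x + flux_p q x * Derive Phi x
          - (d_p w q x * (Derive Phi (clamp (-1) 0 x) / Derive H x ^ 3)
             + w q x * (mu * Derive rho x * Phi x))).
  - apply (is_derive_minus (fun y => flux_p q y * Phi y)
             (fun y => w q y * (Derive Phi (clamp (-1) 0 y) / Derive H y ^ 3))).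
    + apply (is_derive_mult (flux_p q) Phi); [apply flux_p_derive, Hx| |apply Rmult_comm].
      apply Derive_correct, Phi_ex_derive.
    + apply (is_derive_mult (fun y => w q y)
               (fun y => Derive Phi (clamp (-1) 0 y) / Derive H y ^ 3));
        [|apply Phi_ratio_clamp_derive, Hx|apply Rmult_comm].
      apply (w_derive_p nil); simpl; lia.
  - assert (E := flux_p_sub_energy q x ltac:(lra)).
    replace (energy q x) with (d_p w q x / Derive H x ^ 3 - flux_p q x) by lra.
    rewrite clamp_id by lra. assert (0 < Derive H x) by (apply DH_pos; lra).
    simpl. field. lra.
Qed.

Lemma potential_continuity q x : -1 <= x <= 0 -> continuity_pt (potential q) x.
Proof.
  intros Hx. assert (HH := DH_pos x Hx).
  apply (continuity_pt_minus (fun y => flux_p q y * Phi y)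
           (fun y => w q y * (Derive Phi (clamp (-1) 0 y) / Derive H y ^ 3))).
  - apply (continuity_pt_mult (flux_p q) Phi); apply continuity_pt_of_ex_derive.
    + apply flux_p_ex_derive, Hx.
    + apply Phi_ex_derive.
  - apply (continuity_pt_mult (fun y => w q y)
             (fun y => Derive Phi (clamp (-1) 0 y) / Derive H y ^ 3)).
    + apply continuity_pt_of_ex_derive, (w_ex_derive_p nil); simpl; lia.
    + apply (continuity_pt_div (fun y => Derive Phi (clamp (-1) 0 y)) (fun y => Derive H y ^ 3)).
      * apply continuity_pt_filterlim, continuous_Derive_Phi_clamp.
      * apply continuity_pt_of_ex_derive. auto_derive. apply DH_ex_derive.
      * apply pow_nonzero. lra.
Qed.

Lemma potential_bottom q : potential q (-1) = 0.
Proof. unfold potential. rewrite Phi_bottom, w_bottom. ring. Qed.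

Lemma potential_top q : potential q 0 = A_coef rho H mu Phi * w q 0.
Proof.
  unfold potential, A_coef. rewrite flux_p_top, clamp_id by lra. unfold Rdiv. ring.
Qed.

Lemma energy_identity q :
  RInt (fun p => energy q p * Derive Phi p) (-1) 0
  = - A_coef rho H mu Phi * w q 0 - RInt (fun p => d_q_flux_q q p * Phi p) (-1) 0.
Proof.
  set (u := fun p => d_q_flux_q q p * Phi p).
  set (v := fun p => energy q p * Derive Phi p).
  assert (Hu : forall x, continuous (fun p => u (clamp (-1) 0 p)) x).
  { apply continuous_clamp_comp; [lra|]. intros p Hp. apply continuity_pt_of_ex_derive.
    apply (ex_derive_mult (d_q_flux_q q) Phi);
      [apply d_q_flux_q_ex_derive, Hp|apply Phi_ex_derive]. }
  assert (Hv : forall x, continuous (fun p => v (clamp (-1) 0 p)) x).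
  { intro x. apply (continuous_mult (fun p => energy q (clamp (-1) 0 p))
                                    (fun p => Derive Phi (clamp (-1) 0 p))).
    - apply continuous_clamp_comp; [lra|]. intros p Hp.
      apply continuity_pt_of_ex_derive, energy_ex_derive, Hp.
    - apply continuous_Derive_Phi_clamp. }
  assert (Hftc : RInt (fun p => - (u (clamp (-1) 0 p) + v (clamp (-1) 0 p))) (-1) 0
                 = potential q 0 - potential q (-1)).
  { apply RInt_derive_interior; [lra| |apply potential_continuity|].
    - intros x Hx. unfold u, v. rewrite clamp_id by lra. apply potential_derive, Hx.
    - intro x. apply (continuous_opp (fun p => u (clamp (-1) 0 p) + v (clamp (-1) 0 p))).
      apply (continuous_plus (fun p => u (clamp (-1) 0 p)) (fun p => v (clamp (-1) 0 p))); auto. }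
  rewrite potential_top, potential_bottom in Hftc.
  rewrite (is_RInt_unique _ _ _ (- (RInt u (-1) 0 + RInt v (-1) 0))) in Hftc; [lra|].
  apply (is_RInt_opp (fun p => u (clamp (-1) 0 p) + v (clamp (-1) 0 p))).
  apply (is_RInt_plus (fun p => u (clamp (-1) 0 p)) (fun p => v (clamp (-1) 0 p)));
    apply is_RInt_clamp; auto; lra.
Qed.

Lemma w_lipschitz_bounded s : (length s <= 2)%nat -> forall p, -1 <= p <= 0 ->
  lipschitz_bounded (fun _ => True) (fun q => pder s w q p) Cw Cw.
Proof.
  intros Hs p Hp x y _ _. split; [|apply w_bound; [lia|exact Hp]].
  apply (Rabs_sub_le_of_derive_bound (fun q => pder s w q p) (fun q => pder (true :: s) w q p)).
  intros t _.
  split; [apply w_derive_q; lia|apply w_bound; [simpl; lia|exact Hp]].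
Qed.

Lemma height_p_lipschitz_bounded p : -1 <= p <= 0 ->
  lipschitz_bounded (fun _ => True) (fun q => height_p q p) (0 + Cw) (CH + Cw).
Proof.
  intros Hp. apply (lipschitz_bounded_plus _ (fun _ => Derive H p) (fun q => d_p w q p)).
  - apply lipschitz_bounded_const, DH_bound, Hp.
  - apply (w_lipschitz_bounded (false :: nil)); [simpl; lia|exact Hp].
Qed.

Lemma d_q_flux_q_lipschitz : exists L B, forall p, -1 <= p <= 0 ->
  lipschitz_bounded (fun _ => True) (fun q => d_q_flux_q q p * Phi p) L B.
Proof.
  destruct Phi_bounded as [KP HKP].
  do 2 eexists. intros p Hp.
  apply (lipschitz_bounded_ext _
           (fun q => (pder (true :: true :: nil) w q p * height_p q p
                      + - (pder (true :: nil) w q p * pder (true :: false :: nil) w q p))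
                     * (/ height_p q p * / height_p q p) * Phi p)).
  { intros q _. assert (Hc := height_p_ge q p Hp). unfold d_q_flux_q. simpl. field. lra. }
  assert (Hinv := lipschitz_bounded_inv _ (fun q => height_p q p) _ _ c c_pos
                    (fun q _ => height_p_ge q p Hp) (height_p_lipschitz_bounded p Hp)).
  apply lipschitz_bounded_mult; [|apply lipschitz_bounded_const, HKP, Hp].
  apply lipschitz_bounded_mult; [|apply lipschitz_bounded_mult; exact Hinv].
  apply lipschitz_bounded_plus; [|apply lipschitz_bounded_opp]; apply lipschitz_bounded_mult;
    solve [apply height_p_lipschitz_bounded, Hp | apply w_lipschitz_bounded; [simpl; lia|exact Hp]].
Qed.

Lemma flux_q_ex_derive q p : -1 <= p <= 0 -> ex_derive (flux_q q) p.
Proof.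
  intros Hp. assert (Hc := height_p_ge q p Hp).
  unfold flux_q. auto_derive. solve_side_conditions. lra.
Qed.

Definition flux_integral (q : R) : R := RInt (fun p => flux_q q p * Phi p) (-1) 0.

Definition d_flux_integral (q : R) : R := RInt (fun p => d_q_flux_q q p * Phi p) (-1) 0.

Lemma flux_integral_derive q : is_derive flux_integral q (d_flux_integral q).
Proof.
  destruct d_q_flux_q_lipschitz as [L [B HL]].
  apply (is_derive_RInt_param_lipschitz (fun q p => flux_q q p * Phi p)
           (fun q p => d_q_flux_q q p * Phi p) (-1) 0 L); [lra| | | |].
  - intros u t Ht.
    exact (is_derive_scal_l (V := R_NormedModule) _ _ _ (Phi t) (flux_q_derive_q u t Ht)).
  - intros u v t Ht. apply (HL t Ht u v I I).
  - intro u. apply ex_RInt_of_ex_derive; [lra|]. intros p Hp.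
    apply (ex_derive_mult (flux_q u) Phi); [apply flux_q_ex_derive, Hp|apply Phi_ex_derive].
  - intro u. apply ex_RInt_of_ex_derive; [lra|]. intros p Hp.
    apply (ex_derive_mult (d_q_flux_q u) Phi); [apply d_q_flux_q_ex_derive, Hp|apply Phi_ex_derive].
Qed.

Lemma continuous_d_flux_integral x : continuous d_flux_integral x.
Proof.
  destruct d_q_flux_q_lipschitz as [L [B HL]].
  apply (continuous_of_lipschitz _ _ ((0 - -1) * L)). intro y. unfold d_flux_integral.
  apply (RInt_param_lipschitz (fun q p => d_q_flux_q q p * Phi p) (-1) 0 L); [lra| |].
  - intros u v t Ht. apply (HL t Ht u v I I).
  - intro u. apply ex_RInt_of_ex_derive; [lra|]. intros p Hp.
    apply (ex_derive_mult (d_q_flux_q u) Phi); [apply d_q_flux_q_ex_derive, Hp|apply Phi_ex_derive].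
Qed.

Lemma flux_integral_decay eps : 0 < eps ->
  exists K, forall q, K < Rabs q -> Rabs (flux_integral q) < eps.
Proof.
  intros Heps. destruct Phi_bounded as [KP HKP].
  assert (HKP0 : 0 <= KP) by (eapply Rle_trans; [apply Rabs_pos|apply (HKP 0); lra]).
  set (e := eps * c / (KP + 1)).
  assert (He : 0 < e) by (unfold e; apply Rdiv_lt_0_compat; [apply Rmult_lt_0_compat|]; lra).
  destruct (w_q_decay e He) as [K HK]. exists K. intros q Hq.
  apply Rle_lt_trans with ((0 - -1) * (e / c * KP)).
  - apply abs_RInt_le_const; [lra| |].
    + apply ex_RInt_of_ex_derive; [lra|]. intros p Hp.
      apply (ex_derive_mult (flux_q q) Phi); [apply flux_q_ex_derive, Hp|apply Phi_ex_derive].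
    + intros p Hp. assert (Hc := height_p_ge q p Hp). assert (Hw := HK q p Hq Hp).
      unfold flux_q, Rdiv. rewrite !Rabs_mult, Rabs_inv, (Rabs_right (height_p q p)) by lra.
      apply Rmult_le_compat; try apply Rmult_le_pos; try apply Rabs_pos;
        [apply Rlt_le, Rinv_0_lt_compat; lra| |apply HKP, Hp].
      apply Rmult_le_compat; [apply Rabs_pos|apply Rlt_le, Rinv_0_lt_compat; lra|lra|].
      apply Rinv_le_contravar; lra.
  - replace ((0 - -1) * (e / c * KP)) with (eps * (KP / (KP + 1))) by (unfold e; field; lra).
    assert (KP / (KP + 1) < 1)
      by (apply (Rmult_lt_reg_r (KP + 1)); [lra|]; unfold Rdiv; rewrite Rmult_assoc, Rinv_l; lra).
    nra.
Qed.

Lemma is_lim_flux_integral_difference :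
  is_lim (fun M => flux_integral (- M) - flux_integral M) p_infty 0.
Proof.
  apply is_lim_spec. intro eps. simpl.
  destruct (flux_integral_decay (eps / 2)) as [K HK];
    [apply Rdiv_lt_0_compat; [apply cond_pos|lra]|].
  exists (Rabs K). intros M HM.
  assert (HKM : K < Rabs M)
    by (pose proof (Rle_abs K); pose proof (Rabs_pos K); rewrite Rabs_right; lra).
  assert (H1 := HK M HKM). assert (H2 := HK (- M) ltac:(rewrite Rabs_Ropp; exact HKM)).
  rewrite Rminus_0_r. revert H1 H2. split_Rabs; lra.
Qed.

Lemma energy_integral_eq M :
  RInt (fun q => RInt (fun p => energy q p * Derive Phi p) (-1) 0) (-M) M
  + A_coef rho H mu Phi * RInt (fun q => w q 0) (-M) M
  = flux_integral (- M) - flux_integral M.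
Proof.
  set (A := A_coef rho H mu Phi).
  assert (Iw : ex_RInt (fun q => w q 0) (-M) M).
  { apply (ex_RInt_continuous (V := R_CompleteNormedModule)). intros z _.
    apply continuous_of_ex_derive. eexists. apply (w_derive_q nil); simpl; lia. }
  assert (Id : is_RInt d_flux_integral (-M) M (flux_integral M - flux_integral (- M))).
  { apply (is_RInt_derive flux_integral d_flux_integral); intros x _;
      [apply flux_integral_derive|apply continuous_d_flux_integral]. }
  rewrite (RInt_ext _ (fun q => - A * w q 0 - d_flux_integral q))
    by (intros q _; apply energy_identity).
  rewrite (is_RInt_unique _ _ _ (- A * RInt (fun q => w q 0) (-M) M
                                  - (flux_integral M - flux_integral (- M)))); [ring|].
  apply (is_RInt_minus (fun q => - A * w q 0) d_flux_integral); [|exact Id].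
  apply (is_RInt_scal (fun q => w q 0)), (RInt_correct (V := R_CompleteNormedModule)), Iw.
Qed.

Lemma energy_flux_limit :
  is_lim
    (fun M =>
       RInt (fun q => RInt (fun p =>
           (Derive H p ^ 3 * (d_q w q p)^2 + (Derive H p + 2 * d_p height q p) * (d_p w q p)^2)
             / (2 * (d_p height q p)^2 * Derive H p ^ 3) * Derive Phi p) (-1) 0) (-M) M
       + A_coef rho H mu Phi * RInt (fun q => w q 0) (-M) M)
    p_infty 0.
Proof.
  rewrite d_p_height.
  apply (is_lim_ext (fun M => flux_integral (- M) - flux_integral M));
    [|exact is_lim_flux_integral_difference].
  intro M. symmetry. apply energy_integral_eq.
Qed.

End EnergyFlux.

Theorem lemma4p3
  (alpha : R) (rho H : R -> R) (w : R -> R -> R) (F : R) (Phi : R -> R)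
  (Halpha : 0 < alpha < 1)
  (Hrho : hoelder1 2 alpha rho (-1) 0)
  (Hrho_pos : forall p, -1 <= p <= 0 -> 0 < rho p)
  (Hrho_p : forall p, -1 <= p <= 0 -> Derive rho p <= 0)
  (HH : hoelder1 3 alpha H (-1) 0)
  (HHm1 : H (-1) = 0) (HH0 : H 0 = 1)
  (HHp : forall p, -1 <= p <= 0 -> 0 < Derive H p)
  (HwX : in_X alpha w)
  (HF : F <> 0)
  (Hsol : height_eq rho H w F)
  (HPhi : is_Phi rho H (/ F^2) Phi) :
  let h := fun q p => H p + w q p in
  is_lim
    (fun M =>
       RInt (fun q => RInt (fun p =>
           (Derive H p ^ 3 * (d_q w q p)^2 + (Derive H p + 2 * d_p h q p) * (d_p w q p)^2)
             / (2 * (d_p h q p)^2 * Derive H p ^ 3) * Derive Phi p) (-1) 0) (-M) M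
       + A_coef rho H (/ F^2) Phi * RInt (fun q => w q 0) (-M) M)
    p_infty 0.
Proof.
  intros h.
  destruct HwX as [[w_deriv [Cw [w_bound _]]] [_ [w_decay w_bottom]]].
  destruct Hsol as [eq_interior [eq_top [_ [c [c_pos height_p_lower]]]]].
  destruct HPhi as [Phi_deriv [Phi_ode [Phi_bottom _]]].
  destruct HH as [H_deriv [CH [H_bound _]]].
  destruct Hrho as [_ [Cr [rho_bound _]]].
  apply (energy_flux_limit rho H Phi w (/ F ^ 2) c CH Cr Cw); auto.
  - intro x. apply (H_deriv 0%nat). lia.
  - intro x. apply (H_deriv 1%nat). lia.
  - intros p Hp. apply (H_bound 2%nat); [lia|exact Hp].
  - intros p Hp. apply (H_bound 1%nat); [lia|exact Hp].
  - intros p Hp. apply (rho_bound 1%nat); [lia|exact Hp].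
  - intros eps Heps. destruct (w_decay eps Heps) as [K HK]. exists K.
    intros q p. apply (HK (true :: nil)). simpl. lia.
Qed.
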